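(* Let $\pi:\Delta\to\mathbb F[\overline A,\overline B,\overline C]$ be the $\mathbb F$-algebra homomorphism sending $A\mapsto\overline A$, $B\mapsto\overline B$, $C\mapsto\overline C$. Then (i) $\langle A,B\rangle$ is the preimage under $\pi$ of the subalgebra $\mathbb F[\overline A,\overline B]$; (ii) $\langle B,C\rangle$ is the preimage of $\mathbb F[\overline B,\overline C]$; (iii) $\langle A,C\rangle$ is the preimage of $\mathbb F[\overline A,\overline C]$.
   Context: Let $\mathbb F$ be a field and fix a nonzero $q\in\mathbb F$ with $q^4\neq 1$. The universal Askey--Wilson algebra $\Delta$ is the associative $\mathbb F$-algebra with 1 with generators $A,B,C$ subject to the relations that each of $A+\frac{qBC-q^{-1}CB}{q^2-q^{-2}}$, $B+\frac{qCA-q^{-1}AC}{q^2-q^{-2}}$, $C+\frac{qAB-q^{-1}BA}{q^2-q^{-2}}$ is central. $\overline A,\overline B,\overline C$ are mutually commuting indeterminates, $\mathbb F[\overline A,\overline B]$ etc. denote the subalgebras of $\mathbb F[\overline A,\overline B,\overline C]$ generated by the indicated variables. For a subset $\mathcal S\subseteq\Delta$, $\langle\mathcal S\rangle$ denotes the $\mathbb F$-subalgebra of $\Delta$ generated by $\mathcal S$. *)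

From HB Require Import structures.
From mathcomp Require Import all_boot all_order all_algebra.
From mathcomp Require Import mpoly.
Set Implicit Arguments. Unset Strict Implicit. Unset Printing Implicit Defensive.
Import GRing.Theory.
Local Open Scope ring_scope.

Definition central (F : fieldType) (R : algType F) (x : R) : Prop :=
  forall y : R, x * y = y * x.

Definition AW_rel (F : fieldType) (q : F) (R : algType F) (a b c : R) : Prop :=
  let k := (q ^+ 2 - q ^- 2)^-1 in
  [/\ central (a + k *: (q *: (b * c) - q^-1 *: (c * b))),
      central (b + k *: (q *: (c * a) - q^-1 *: (a * c))) &
      central (c + k *: (q *: (a * b) - q^-1 *: (b * a)))].

Definition alg_hom (F : fieldType) (R S : algType F) (f : R -> S) : Prop :=
  [/\ forall x y, f (x + y) = f x + f y,
      forall (a : F) x, f (a *: x) = a *: f x,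
      forall x y, f (x * y) = f x * f y &
      f 1 = 1].

Definition is_universal_AW (F : fieldType) (q : F) (D : algType F)
  (A B C : D) : Prop :=
  AW_rel q A B C /\
  forall (R : algType F) (a b c : R), AW_rel q a b c ->
    (exists f : D -> R, [/\ alg_hom f, f A = a, f B = b & f C = c]) /\
    (forall f g : D -> R, alg_hom f -> alg_hom g ->
       f A = g A -> f B = g B -> f C = g C -> forall x, f x = g x).

Definition subalg_closedP (F : fieldType) (R : algType F) (P : R -> Prop) : Prop :=
  [/\ P 1, (forall x y, P x -> P y -> P (x + y)),
      (forall x y, P x -> P y -> P (x * y)) &
      (forall (a : F) x, P x -> P (a *: x))].

Definition gen_subalg (F : fieldType) (R : algType F) (S : R -> Prop) (x : R) : Prop :=
  forall P : R -> Prop, subalg_closedP P -> (forall s, S s -> P s) -> P x.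

From HB Require Import structures.
From mathcomp Require Import all_boot all_order all_algebra.
From mathcomp Require Import mpoly.
From mathcomp Require Import boolp generic_quotient ring_quotient.
Set Implicit Arguments. Unset Strict Implicit. Unset Printing Implicit Defensive.
Import GRing.Theory.
Local Open Scope ring_scope.

(* Write S for <A, B>.  The central element
   gamma = C + (q A B - q^-1 B A)/(q^2 - q^-2) gives C = gamma + w with w in S, so
   Delta = S[gamma].  Let K be the ideal of S generated by [A, B].  Expanding
   [beta, B] = 0 for the second central element beta shows gamma [A, B] in K, so K is
   stable under gamma, hence a two-sided ideal of Delta; it lies in S and contains
   every commutator of Delta.  Thus Delta/K is commutative, and evaluating polynomials
   at the classes of A, B, C inverts pi modulo K: if pi x lies in F[Abar, Bbar] then
   x = z mod K for some z in S, so x lies in S.  The other two cases follow from the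
   cyclic symmetry of the relations. *)

Section AlgHom.
Variable F : fieldType.

Lemma alg_homN (R S : algType F) (f : R -> S) : alg_hom f -> {morph f : x / - x}.
Proof. by case=> _ fZ _ _ x; rewrite -scaleN1r fZ scaleN1r. Qed.

Lemma alg_homB (R S : algType F) (f : R -> S) : alg_hom f ->
  {morph f : x y / x - y}.
Proof. by move=> hf x y; case: (hf) => fD _ _ _; rewrite fD (alg_homN hf). Qed.

Lemma alg_hom_id (R : algType F) : alg_hom (@id R).
Proof. by []. Qed.

Lemma alg_hom_comp (R S T : algType F) (f : R -> S) (g : S -> T) :
  alg_hom f -> alg_hom g -> alg_hom (g \o f).
Proof.
case=> fD fZ fM f1 [gD gZ gM g1]; split=> /= [x y|s x|x y|].
- by rewrite fD gD.
- by rewrite fZ gZ.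
- by rewrite fM gM.
- by rewrite f1 g1.
Qed.

End AlgHom.

Section GeneratedSubalgebra.
Variables (F : fieldType) (R : algType F).

Section Generators.
Variable G : R -> Prop.

Lemma gen_subalg_closed : subalg_closedP (gen_subalg G).
Proof.
split=> [P [] //|x y hx hy P hP hG|x y hx hy P hP hG|s x hx P hP hG];
  case: (hP) => _ PD PM PZ.
- by apply: PD; [apply: hx|apply: hy].
- by apply: PM; [apply: hx|apply: hy].
- by apply: PZ; apply: hx.
Qed.

Lemma gen_subalg_base s : G s -> gen_subalg G s.
Proof. by move=> hs P _; apply. Qed.

Lemma gen_subalg1 : gen_subalg G 1.
Proof. by case: gen_subalg_closed. Qed.

Lemma gen_subalgD x y : gen_subalg G x -> gen_subalg G y -> gen_subalg G (x + y).
Proof. by case: gen_subalg_closed => _ + _ _; apply. Qed.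

Lemma gen_subalgM x y : gen_subalg G x -> gen_subalg G y -> gen_subalg G (x * y).
Proof. by case: gen_subalg_closed => _ _ + _; apply. Qed.

Lemma gen_subalgZ s x : gen_subalg G x -> gen_subalg G (s *: x).
Proof. by case: gen_subalg_closed => _ _ _; apply. Qed.

Lemma gen_subalgB x y : gen_subalg G x -> gen_subalg G y -> gen_subalg G (x - y).
Proof.
by move=> hx hy; rewrite -scaleN1r; apply: gen_subalgD => //; apply: gen_subalgZ.
Qed.

End Generators.

Lemma gen_subalg_mono (G G' : R -> Prop) : (forall s, G s -> G' s) ->
  forall x, gen_subalg G x -> gen_subalg G' x.
Proof.
move=> GG' x hx; apply: hx; first exact: gen_subalg_closed.
by move=> s /GG'; apply: gen_subalg_base.
Qed.

Lemma gen_subalg_swap (u v x : R) :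
  gen_subalg (fun y => y = u \/ y = v) x <-> gen_subalg (fun y => y = v \/ y = u) x.
Proof. by split; apply: gen_subalg_mono => s; rewrite or_comm. Qed.

End GeneratedSubalgebra.

Lemma alg_hom_gen_subalg (F : fieldType) (R T : algType F) (f : R -> T)
    (G : R -> Prop) (G' : T -> Prop) :
  alg_hom f -> (forall s, G s -> gen_subalg G' (f s)) ->
  forall x, gen_subalg G x -> gen_subalg G' (f x).
Proof.
case=> fD fZ fM f1 hG x hx; apply: hx hG.
have [c1 c2 c3 c4] := gen_subalg_closed G'.
split=> [|u v hu hv|u v hu hv|s u hu]; rewrite ?f1 ?fD ?fM ?fZ //.
- exact: c2.
- exact: c3.
- exact: c4.
Qed.

Definition rcomm (R : pzRingType) (x y : R) : R := x * y - y * x.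

Section Commutator.
Variables (F : fieldType) (R : algType F).
Implicit Types x y z : R.

Lemma rcommC x y : rcomm x y = - rcomm y x.
Proof. by rewrite /rcomm opprB. Qed.

Lemma rcommxx x : rcomm x x = 0.
Proof. by rewrite /rcomm subrr. Qed.

Lemma rcommr1 x : rcomm x 1 = 0.
Proof. by rewrite /rcomm mulr1 mul1r subrr. Qed.

Lemma rcommDl x y z : rcomm (x + y) z = rcomm x z + rcomm y z.
Proof. by rewrite /rcomm mulrDl mulrDr opprD addrACA. Qed.

Lemma rcommDr x y z : rcomm z (x + y) = rcomm z x + rcomm z y.
Proof. by rewrite rcommC rcommDl opprD -!rcommC. Qed.

Lemma rcommZl s x y : rcomm (s *: x) y = s *: rcomm x y.
Proof. by rewrite /rcomm -scalerAl -scalerAr scalerBr. Qed.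

Lemma rcommZr s x y : rcomm y (s *: x) = s *: rcomm y x.
Proof. by rewrite rcommC rcommZl -scalerN -rcommC. Qed.

Lemma rcommMr x y z : rcomm z (x * y) = rcomm z x * y + x * rcomm z y.
Proof. by rewrite /rcomm mulrBr mulrBl !mulrA addrA subrK. Qed.

Lemma rcommNl x y : rcomm (- x) y = - rcomm x y.
Proof. by rewrite -scaleN1r rcommZl scaleN1r. Qed.

Lemma rcomm_centralDl c x y : central c -> rcomm (c + x) y = rcomm x y.
Proof. by move=> hc; rewrite rcommDl /rcomm hc subrr add0r. Qed.

Lemma rcomm_centralDr c x y : central c -> rcomm y (c + x) = rcomm y x.
Proof. by move=> hc; rewrite rcommC rcomm_centralDl // -rcommC. Qed.

Lemma rcomm_centralMl c x y : central c -> rcomm (c * x) y = c * rcomm x y.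
Proof. by move=> hc; rewrite /rcomm mulrBr !mulrA -hc. Qed.

Lemma alg_homR (S : algType F) (f : R -> S) x y : alg_hom f ->
  f (rcomm x y) = rcomm (f x) (f y).
Proof. by move=> hf; case: (hf) => _ _ fM _; rewrite (alg_homB hf) !fM. Qed.

Definition ideal_wrt (G P : R -> Prop) : Prop :=
  [/\ P 0, forall x y, P x -> P y -> P (x + y), forall s x, P x -> P (s *: x) &
      forall g x, G g -> P x -> P (g * x) /\ P (x * g)].

Definition gen_ideal (G : R -> Prop) (x0 x : R) : Prop :=
  forall P, ideal_wrt G P -> P x0 -> P x.

Section IdealWrt.
Variables (G P : R -> Prop) (hP : ideal_wrt G P).

Lemma ideal_wrtN x : P x -> P (- x).
Proof. by case: hP => _ _ PZ _; rewrite -scaleN1r; apply: PZ. Qed.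

Lemma ideal_wrt_gen_subalg : ideal_wrt (gen_subalg G) P.
Proof.
have [P0 PD PZ PM] := hP; split=> // u x hu.
apply: (hu (fun u => forall x, P x -> P (u * x) /\ P (x * u))); last first.
  by move=> g hg y; apply: PM.
split=> [y|v w hv hw y hy|v w hv hw y hy|s v hv y hy].
- by rewrite mul1r mulr1.
- have [hvl hvr] := hv y hy; have [hwl hwr] := hw y hy.
  by rewrite mulrDl mulrDr; split; apply: PD.
- split; first by rewrite -mulrA; apply: (hv _ (hw y hy).1).1.
  by rewrite mulrA; apply: (hw _ (hv y hy).2).2.
- have [hvl hvr] := hv y hy.
  by rewrite -scalerAl -scalerAr; split; apply: PZ.
Qed.

Lemma rcomm_gen_subalgr z : (forall g, G g -> P (rcomm z g)) ->
  forall v, gen_subalg G v -> P (rcomm z v).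
Proof.
have [P0 PD PZ PM] := ideal_wrt_gen_subalg; move=> hz v hv.
suff [] : gen_subalg G v /\ P (rcomm z v) by [].
apply: (hv (fun v => gen_subalg G v /\ P (rcomm z v))); last first.
  by move=> g hg; split; [apply: gen_subalg_base|apply: hz].
have [c1 c2 c3 c4] := gen_subalg_closed G.
split=> [|x y [hx Px] [hy Py]|x y [hx Px] [hy Py]|s x [hx Px]].
- by rewrite rcommr1.
- by rewrite rcommDr; split; [apply: c2|apply: PD].
- rewrite rcommMr; split; first exact: c3.
  by apply: PD; [apply: (PM _ _ hy Px).2|apply: (PM _ _ hx Py).1].
- by rewrite rcommZr; split; [apply: c4|apply: PZ].
Qed.

Lemma rcomm_gen_subalg : (forall g g', G g -> G g' -> P (rcomm g g')) ->
  forall u v, gen_subalg G u -> gen_subalg G v -> P (rcomm u v).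
Proof.
move=> hG u v hu hv; rewrite rcommC; apply: ideal_wrtN.
apply: (rcomm_gen_subalgr _ hu) => g hg; rewrite rcommC; apply: ideal_wrtN.
by apply: (rcomm_gen_subalgr _ hv) => g' hg'; apply: hG.
Qed.

End IdealWrt.

Lemma ideal_wrt_sub (G G' P : R -> Prop) : (forall g, G' g -> G g) ->
  ideal_wrt G P -> ideal_wrt G' P.
Proof. by move=> GG' [P0 PD PZ PM]; split=> // g x /GG'; apply: PM. Qed.

Lemma gen_ideal_ideal_wrt (G : R -> Prop) x0 : ideal_wrt G (gen_ideal G x0).
Proof.
split=> [P [] //|x y hx hy P hP h0|s x hx P hP h0|g x hg hx].
- by case: (hP) => _ PD _ _; apply: PD; [apply: hx|apply: hy].
- by case: (hP) => _ _ PZ _; apply: PZ; apply: hx.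
- by split=> P hP h0; case: (hP) => _ _ _ /(_ g x hg (hx P hP h0)) [].
Qed.

Lemma gen_subalg_ideal_wrt (G : R -> Prop) : ideal_wrt G (gen_subalg G).
Proof.
have [_ c2 c3 c4] := gen_subalg_closed G.
split=> [|||g x hg hx]; [|exact: c2|exact: c4|].
- by rewrite -(scale0r (1 : R)); apply: c4; apply: gen_subalg1.
- by split; apply: c3 => //; apply: gen_subalg_base.
Qed.

Lemma alg_hom_ker_ideal_wrt (S : algType F) (f : R -> S) (G : R -> Prop) :
  alg_hom f -> ideal_wrt G (fun x => f x = 0).
Proof.
move=> hf; have [fD fZ fM _] := hf.
split=> [|x y hx hy|s x hx|g x _ hx].
- by rewrite -(subrr 0) (alg_homB hf) subrr.
- by rewrite fD hx hy addr0.
- by rewrite fZ hx scaler0.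
- by rewrite !fM hx mulr0 mul0r.
Qed.

End Commutator.

Lemma AW_rel_rot (F : fieldType) (q : F) (R : algType F) (a b c : R) :
  AW_rel q a b c -> AW_rel q b c a.
Proof. by case. Qed.

Lemma AW_rel_alg_hom_inj (F : fieldType) (q : F) (R S : algType F) (f : R -> S)
    (a b c : R) :
  alg_hom f -> injective f -> AW_rel q (f a) (f b) (f c) -> AW_rel q a b c.
Proof.
move=> hf f_inj; have [fD fZ fM _] := hf.
by case=> ha hb hc; split=> y; apply: f_inj;
  rewrite !(fM, fD, fZ, alg_homN hf); [apply: ha|apply: hb|apply: hc].
Qed.

Section SubalgebraType.
Variables (F : fieldType) (R : algType F) (P : R -> Prop) (hP : subalg_closedP P).

Definition subalg_pred : {pred R} := fun x => `[< P x >].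

Fact subalg_pred_closed : GRing.subalg_closed subalg_pred.
Proof.
have [P1 PD PM PZ] := hP; have P0 : P 0 by rewrite -(scale0r (1 : R)); apply: PZ.
split=> [|s x y /asboolP hx /asboolP hy|x y /asboolP hx /asboolP hy]; apply/asboolP.
- exact: P1.
- by apply: PD => //; apply: PZ.
- exact: PM.
Qed.

HB.instance Definition _ := GRing.isSubalgClosed.Build F R subalg_pred
  subalg_pred_closed.

Record subalg_type := SubalgType { subalg_val : R; _ : subalg_val \in subalg_pred }.

HB.instance Definition _ := [isSub for subalg_val].
HB.instance Definition _ := [Choice of subalg_type by <:].
HB.instance Definition _ := [SubChoice_isSubAlgebra of subalg_type by <:].

Lemma alg_hom_subalg_val : alg_hom subalg_val.
Proof.
split=> [u v|s u|u v|]; rewrite -![subalg_val _]/(val _).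
- exact: rmorphD.
- exact: linearZ.
- exact: rmorphM.
- exact: rmorph1.
Qed.

End SubalgebraType.

Lemma universal_AW_gen (F : fieldType) (q : F) (D : algType F) (A B C : D) :
  is_universal_AW q A B C ->
  forall x, gen_subalg (fun y => y = A \/ y = B \/ y = C) x.
Proof.
move=> [hrel huniv] x P hP hG.
have mem_sub y : y = A \/ y = B \/ y = C -> y \in subalg_pred P by move/hG/asboolP.
pose A' := SubalgType (mem_sub A (or_introl erefl)).
pose B' := SubalgType (mem_sub B (or_intror (or_introl erefl))).
pose C' := SubalgType (mem_sub C (or_intror (or_intror erefl))).
have hval := alg_hom_subalg_val hP.
have hinj : injective (@subalg_val _ _ P) := val_inj.
have rel' : AW_rel q A' B' C' :=
  AW_rel_alg_hom_inj (a := A') (b := B') (c := C') hval hinj hrel.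
have [[f [hf fA fB fC]] _] := huniv _ _ _ _ rel'.
have [_ huniq] := huniv _ _ _ _ hrel.
(* [subalg_val \o f] and [id] agree on A, B, C, hence everywhere. *)
have fxE : subalg_val (f x) = x.
  by apply: (huniq _ _ (alg_hom_comp hf hval) (alg_hom_id D)); rewrite /= ?fA ?fB ?fC.
by rewrite -fxE; apply/asboolP; exact: (valP (f x)).
Qed.

Section CommutativeQuotient.
Local Open Scope quotient_scope.
Variables (F : fieldType) (R : algType F) (I : R -> Prop).
Hypotheses (hI : ideal_wrt (fun _ => True) I) (I_rcomm : forall x y, I (rcomm x y))
  (I1 : ~ I 1).

Definition comm_quot_pred : {pred R} := fun x => `[< I x >].

Fact comm_quot_pred_closed : GRing.zmod_closed comm_quot_pred.
Proof.
have [I0 ID _ _] := hI; split=> [|x y /asboolP hx /asboolP hy]; apply/asboolP => //.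
by apply: ID => //; apply: ideal_wrtN hI _ _.
Qed.

HB.instance Definition _ :=
  GRing.isZmodClosed.Build R comm_quot_pred comm_quot_pred_closed.

Definition comm_quot := Quotient.quot comm_quot_pred.
HB.instance Definition _ := GRing.Zmodule.on comm_quot.

Definition comm_pi (x : R) : comm_quot := \pi_comm_quot x.

Lemma comm_pi_eq x y : comm_pi x = comm_pi y <-> I (x - y).
Proof.
rewrite /comm_pi; split=> [/eqP|h]; first by rewrite -Quotient.idealrBE => /asboolP.
by apply/eqP; rewrite -Quotient.idealrBE; apply/asboolP.
Qed.

Lemma comm_piB : zmod_morphism comm_pi.
Proof. by move=> x y; rewrite /comm_pi raddfB. Qed.

Lemma comm_piD x y : comm_pi (x + y) = comm_pi x + comm_pi y.
Proof. by rewrite /comm_pi raddfD. Qed.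

Lemma comm_piK : cancel repr comm_pi.
Proof. exact: reprK. Qed.

Definition comm_mul (u v : comm_quot) : comm_quot := comm_pi (repr u * repr v).

Lemma comm_piM x y : comm_pi (x * y) = comm_mul (comm_pi x) (comm_pi y).
Proof.
have [_ ID _ IM] := hI.
apply/comm_pi_eq; set x' := repr _; set y' := repr _.
have hx : I (x - x') by apply/comm_pi_eq; rewrite comm_piK.
have hy : I (y - y') by apply/comm_pi_eq; rewrite comm_piK.
rewrite (_ : x * y - x' * y' = (x - x') * y + x' * (y - y')); last first.
  by rewrite mulrBl mulrBr addrA subrK.
by apply: ID; [apply: (IM y _ _ hx).2|apply: (IM x' _ _ hy).1].
Qed.

Lemma comm_mulA : associative comm_mul.
Proof.
by move=> u v w; rewrite -[u]comm_piK -[v]comm_piK -[w]comm_piK -!comm_piM mulrA.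
Qed.

Lemma comm_mulC : commutative comm_mul.
Proof.
by move=> u v; rewrite -[u]comm_piK -[v]comm_piK -!comm_piM; apply/comm_pi_eq/I_rcomm.
Qed.

Lemma comm_mul1 : left_id (comm_pi 1) comm_mul.
Proof. by move=> u; rewrite -[u]comm_piK -comm_piM mul1r. Qed.

Lemma comm_mulDl : left_distributive comm_mul +%R.
Proof.
move=> u v w; rewrite -[u]comm_piK -[v]comm_piK -[w]comm_piK.
by rewrite -comm_piD -!comm_piM -comm_piD mulrDl.
Qed.

Lemma comm_quot_oner_neq0 : comm_pi 1 != 0.
Proof.
by apply/eqP; rewrite -[0](raddf0 (\pi_comm_quot)) => /comm_pi_eq; rewrite subr0.
Qed.

HB.instance Definition _ := GRing.Zmodule_isComNzRing.Build comm_quot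
  comm_mulA comm_mulC comm_mul1 comm_mulDl comm_quot_oner_neq0.

HB.instance Definition _ := GRing.isZmodMorphism.Build R comm_quot comm_pi comm_piB.
HB.instance Definition _ := GRing.isMonoidMorphism.Build R comm_quot comm_pi
  (conj erefl comm_piM).

Variables (n : nat) (pi : R -> {mpoly F[n]}) (hpi : alg_hom pi) (h : 'I_n -> R).
Variable G : R -> Prop.
Hypotheses (hgen : forall x, gen_subalg G x)
  (hG : forall g, G g -> exists2 t, g = h t & pi g = 'X_t).

(* Evaluation at the classes of the generators; it inverts [pi] modulo [I]. *)
Definition quot_eval : {mpoly F[n]} -> comm_quot :=
  mmap (comm_pi \o in_alg R) (comm_pi \o h).
HB.instance Definition _ := GRing.RMorphism.on quot_eval.

Lemma quot_eval_pi x : quot_eval (pi x) = comm_pi x.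
Proof.
have [piD piZ piM pi1] := hpi.
apply: (@hgen x (fun x => quot_eval (pi x) = comm_pi x)); last first.
  by move=> g /hG [t -> ->]; rewrite /quot_eval mmapX mmap1U.
split=> [|u v hu hv|u v hu hv|s u hu].
- by rewrite pi1 !rmorph1.
- by rewrite piD rmorphD /= hu hv rmorphD.
- by rewrite piM rmorphM /= hu hv rmorphM.
- by rewrite piZ /quot_eval mmapZ -/quot_eval hu /= -rmorphM mulr_algl.
Qed.

Lemma comm_quot_preimage (GX : {mpoly F[n]} -> Prop) (GS : R -> Prop) :
    (forall p, GX p -> exists2 t, p = 'X_t & GS (h t)) ->
  forall x, gen_subalg GX (pi x) -> exists2 z, gen_subalg GS z & I (x - z).
Proof.
move=> hGX x hx.
have [z hz ev_z] : exists2 z, gen_subalg GS z & quot_eval (pi x) = comm_pi z.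
  apply: (hx (fun p => exists2 z, gen_subalg GS z & quot_eval p = comm_pi z)); last first.
    move=> p /hGX [t -> ht]; exists (h t); first exact: gen_subalg_base.
    by rewrite /quot_eval mmapX mmap1U.
  split=> [|u v [zu hzu eu] [zv hzv ev]|u v [zu hzu eu] [zv hzv ev]|s u [zu hzu eu]].
  - by exists 1; [apply: gen_subalg1|rewrite !rmorph1].
  - by exists (zu + zv); [apply: gen_subalgD|rewrite rmorphD /= eu ev rmorphD].
  - by exists (zu * zv); [apply: gen_subalgM|rewrite rmorphM /= eu ev rmorphM].
  - exists (s *: zu); first exact: gen_subalgZ.
    by rewrite /quot_eval mmapZ -/quot_eval eu /= -rmorphM mulr_algl.
by exists z => //; apply/comm_pi_eq; rewrite -quot_eval_pi.
Qed.

End CommutativeQuotient.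

Lemma subr_invr_neq0 (F : fieldType) (q : F) :
  q ^+ 2 - q ^- 2 != 0 -> q - q^-1 != 0.
Proof. by apply: contraNneq => e; rewrite -exprVn subr_sqr e mul0r. Qed.

Section AskeyWilson.
Variables (F : fieldType) (q : F) (D : algType F) (a b c : D).
Hypotheses (hk : q ^+ 2 - q ^- 2 != 0) (hrel : AW_rel q a b c).

Local Notation k := (q ^+ 2 - q ^- 2)^-1.
Local Notation S := (gen_subalg (fun y => y = a \/ y = b)).
Local Notation K := (gen_ideal (fun y => y = a \/ y = b) (rcomm a b)).

Definition AW_gamma : D := c + k *: (q *: (a * b) - q^-1 *: (b * a)).
Definition AW_cAB : D := c - AW_gamma.
Local Notation w := AW_cAB.

Lemma AW_gamma_central : central AW_gamma.
Proof. by case: hrel. Qed.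

Lemma AW_c_decomp : c = AW_gamma + w.
Proof. by rewrite /AW_cAB addrC subrK. Qed.

Lemma S_a : S a. Proof. by apply: gen_subalg_base; left. Qed.
Lemma S_b : S b. Proof. by apply: gen_subalg_base; right. Qed.

Lemma S_AW_cAB : S w.
Proof.
rewrite /AW_cAB /AW_gamma opprD addrA subrr add0r -scaleN1r.
have [Sa Sb] := (S_a, S_b).
by do 2!apply: gen_subalgZ; apply: gen_subalgB; apply: gen_subalgZ; apply: gen_subalgM.
Qed.

Lemma K_ideal_wrt : ideal_wrt (fun y => y = a \/ y = b) K.
Proof. exact: gen_ideal_ideal_wrt. Qed.

Lemma K_rcomm_ab : K (rcomm a b).
Proof. by move=> P. Qed.

Lemma K_rcomm_S u v : S u -> S v -> K (rcomm u v).
Proof.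
have [K0 _ _ _] := K_ideal_wrt.
apply: (rcomm_gen_subalg K_ideal_wrt) => g g' [|] -> [|] ->; rewrite ?rcommxx //.
by rewrite [rcomm b a]rcommC; exact: (ideal_wrtN K_ideal_wrt K_rcomm_ab).
Qed.

Lemma K_sub_S x : K x -> S x.
Proof.
move/(_ _ (gen_subalg_ideal_wrt _)); apply.
have [Sa Sb] := (S_a, S_b).
by apply: gen_subalgB; apply: gen_subalgM.
Qed.

Lemma AW_gamma_rcomm :
  (q - q^-1) *: (AW_gamma * rcomm a b)
  + rcomm (q *: (w * a) - q^-1 *: (a * w)) b = 0.
Proof.
have : rcomm (b + k *: (q *: (c * a) - q^-1 *: (a * c))) b = 0.
  by case: hrel => _ hb _; rewrite /rcomm hb subrr.
rewrite rcommDl rcommxx add0r rcommZl => /eqP.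
rewrite scaler_eq0 invr_eq0 (negbTE hk) /= => /eqP.
rewrite AW_c_decomp mulrDl mulrDr -(AW_gamma_central a).
rewrite !(rcommDl, rcommNl, rcommZl) (rcomm_centralMl _ _ AW_gamma_central).
move: (AW_gamma * _) (rcomm (w * a) b) (rcomm (a * w) b) => G U V <-.
by rewrite !scalerDr scalerBl opprD addrACA.
Qed.

Lemma K_gamma_rcomm : K (AW_gamma * rcomm a b).
Proof.
have hq1 := subr_invr_neq0 hk; have [_ _ KZ _] := K_ideal_wrt.
move/eqP: AW_gamma_rcomm; rewrite addr_eq0 => /eqP.
move/(congr1 (fun x => (q - q^-1)^-1 *: x)); rewrite scalerK // => ->.
apply: KZ; apply: (ideal_wrtN K_ideal_wrt); apply: K_rcomm_S; last exact: S_b.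
have [Sa Sw] := (S_a, S_AW_cAB).
by apply: gen_subalgB; apply: gen_subalgZ; apply: gen_subalgM.
Qed.

Lemma K_gammaM x : K x -> K (AW_gamma * x).
Proof.
have [K0 KD KZ KM] := K_ideal_wrt.
move=> hx; apply: (hx (fun x => K (AW_gamma * x))); last exact: K_gamma_rcomm.
split=> [|u v hu hv|s u hu|g u hg hu].
- by rewrite mulr0.
- by rewrite mulrDr; apply: KD.
- by rewrite -scalerAr; apply: KZ.
- split; last by rewrite mulrA; apply: (KM _ _ hg hu).2.
  by rewrite mulrA AW_gamma_central -mulrA; apply: (KM _ _ hg hu).1.
Qed.

Lemma K_ideal_wrt_gens : ideal_wrt (fun y => y = a \/ y = b \/ y = c) K.
Proof.
have [K0 KD KZ KM] := K_ideal_wrt.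
have [_ _ _ KMS] := ideal_wrt_gen_subalg K_ideal_wrt.
split=> // g x [|[]] -> hx; [by apply: KM => //; left|by apply: KM => //; right|].
rewrite AW_c_decomp mulrDl mulrDr -AW_gamma_central.
have [hwx hxw] := KMS _ _ S_AW_cAB hx.
by split; apply: KD => //; apply: K_gammaM.
Qed.

Hypothesis hgen : forall x, gen_subalg (fun y => y = a \/ y = b \/ y = c) x.

Lemma K_rcomm x y : K (rcomm x y).
Proof.
have hgens g : g = a \/ g = b \/ g = c ->
    exists2 s, S s & forall z, rcomm g z = rcomm s z /\ rcomm z g = rcomm z s.
  case=> [->|[->|->]]; [exists a; [exact: S_a|by []]|exists b; [exact: S_b|by []]|].
  exists w; first exact: S_AW_cAB.
  have hc := AW_gamma_central.
  by move=> z; rewrite AW_c_decomp rcomm_centralDl // rcomm_centralDr.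
apply: (rcomm_gen_subalg K_ideal_wrt_gens) (hgen x) (hgen y).
move=> g g' /hgens[s Ss hs] /hgens[s' Ss' hs'].
by rewrite (hs g').1 (hs' s).2; apply: K_rcomm_S.
Qed.

Lemma K_alg_hom_comm (T : comAlgType F) (f : D -> T) x :
  alg_hom f -> K x -> f x = 0.
Proof.
move=> hf /(_ _ (alg_hom_ker_ideal_wrt _ hf)); apply.
by rewrite alg_homR // /rcomm mulrC subrr.
Qed.

Variables (n : nat) (pi : D -> {mpoly F[n]}) (hpi : alg_hom pi) (i j l : 'I_n).
Hypotheses (hij : i != j) (hil : i != l) (hjl : j != l).
Hypotheses (pia : pi a = 'X_i) (pib : pi b = 'X_j) (pic : pi c = 'X_l).

Lemma AW_subalg_preimage x :
  S x <-> gen_subalg (fun p : {mpoly F[n]} => p = 'X_i \/ p = 'X_j) (pi x).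
Proof.
split.
  by apply: alg_hom_gen_subalg => // s [] ->; apply: gen_subalg_base; [left|right].
move=> hx.
have K1 : ~ K 1.
  by move/(K_alg_hom_comm hpi); case: hpi => _ _ _ -> /eqP; rewrite oner_eq0.
have hK : ideal_wrt (fun _ => True) K.
  exact: ideal_wrt_sub (ideal_wrt_gen_subalg K_ideal_wrt_gens) => g _.
pose h t := if t == i then a else if t == j then b else c.
have hi : h i = a by rewrite /h eqxx.
have hj : h j = b by rewrite /h eq_sym (negbTE hij) eqxx.
have hl : h l = c by rewrite /h eq_sym (negbTE hil) eq_sym (negbTE hjl).
have hG g : g = a \/ g = b \/ g = c -> exists2 t, g = h t & pi g = 'X_t.
  by case=> [|[]] ->; [exists i; rewrite ?hi|exists j; rewrite ?hj|exists l; rewrite ?hl].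
have hGX (p : {mpoly F[n]}) : p = 'X_i \/ p = 'X_j ->
    exists2 t, p = 'X_t & h t = a \/ h t = b.
  by case=> ->; [exists i; rewrite ?hi; [|left]|exists j; rewrite ?hj; [|right]].
have [z Sz Kxz] := comm_quot_preimage hK K_rcomm K1 hpi hgen hG
  (GS := fun y => y = a \/ y = b) hGX hx.
by rewrite -(subrK z x); apply: gen_subalgD => //; apply: K_sub_S.
Qed.

End AskeyWilson.

Lemma AW_coef_neq0 (F : fieldType) (q : F) :
  q != 0 -> q ^+ 4 != 1 -> q ^+ 2 - q ^- 2 != 0.
Proof.
move=> q0; apply: contraNneq => /eqP; rewrite subr_eq0 => /eqP e.
by rewrite (_ : 4 = 2 + 2)%N // exprD {2}e mulfV // expf_neq0.
Qed.

Theorem proposition11p14 (F : fieldType) (q : F) (hq0 : q != 0)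
  (hq4 : q ^+ 4 != 1) (D : algType F) (A B C : D)
  (hD : is_universal_AW q A B C)
  (pi : D -> {mpoly F[3]}) (hpi : alg_hom pi)
  (hA : pi A = 'X_(0 : 'I_3)) (hB : pi B = 'X_(1 : 'I_3))
  (hC : pi C = 'X_(2 : 'I_3)) :
  [/\ forall x : D,
        gen_subalg (fun y => y = A \/ y = B) x <->
        gen_subalg (fun p : {mpoly F[3]} => p = 'X_(0 : 'I_3) \/ p = 'X_(1 : 'I_3)) (pi x),
      forall x : D,
        gen_subalg (fun y => y = B \/ y = C) x <->
        gen_subalg (fun p : {mpoly F[3]} => p = 'X_(1 : 'I_3) \/ p = 'X_(2 : 'I_3)) (pi x) &
      forall x : D,
        gen_subalg (fun y => y = A \/ y = C) x <->
        gen_subalg (fun p : {mpoly F[3]} => p = 'X_(0 : 'I_3) \/ p = 'X_(2 : 'I_3)) (pi x)].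
Proof.
have hk := AW_coef_neq0 hq0 hq4.
have [relA _] := hD; have relB := AW_rel_rot relA; have relC := AW_rel_rot relB.
have genA := universal_AW_gen hD.
have genB y : gen_subalg (fun s => s = B \/ s = C \/ s = A) y.
  by apply: gen_subalg_mono (genA y) => s; tauto.
have genC y : gen_subalg (fun s => s = C \/ s = A \/ s = B) y.
  by apply: gen_subalg_mono (genA y) => s; tauto.
split=> x.
- exact: (AW_subalg_preimage hk relA genA hpi _ _ _ hA hB hC).
- exact: (AW_subalg_preimage hk relB genB hpi _ _ _ hB hC hA).
- rewrite gen_subalg_swap [X in _ <-> X]gen_subalg_swap.
  exact: (AW_subalg_preimage hk relC genC hpi _ _ _ hC hA hB).
Qed.
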